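(* Let $F = F^{\times} \times \mathcal F(P)$ be a factorial monoid and $H \subset F$ a seminormal C-monoid with $H^{\times} = H \cap F^{\times}$ which is dense in $F$. Write $\mathcal C = \mathcal C(H,F)$, $\mathcal C^* = \mathcal C^*(H,F)$, and let the set of idempotents be $\mathsf E(\mathcal C) = \mathsf E(\mathcal C^* ) = \{e_0, e_1, \ldots, e_n\}$ (distinct), where $n \in \mathbb N$, $e_0 = [1]$ and $e_0 + \ldots + e_n = e_n$. For $i \in [0,n]$ let $\mathcal C_i = \mathcal C_{e_i}$ and $\mathcal C_i^* = \mathcal C^*_{e_i}$ be the constituent groups of $e_i$ in $\mathcal C$ resp. $\mathcal C^*$. Let $\mathcal C_H = \{[y] \mid y \in H\}$ and $\mathcal C_{F^{\times}}(H,F) = \{[\epsilon] \mid \epsilon \in F^{\times}\}$. Suppose that every class of $\mathcal C^*$ contains an element of $P$. For every $i \in [0,n]$ let $P_i = \{p \in P \mid [p] \in \mathcal C_i^*\}$, $F_i = F^{\times} \times \mathcal F(P_i)$, $H_i = F_i \cap H$, and let $\varphi_i \colon \mathcal C_{F^{\times}}(H,F) \to \mathcal C_i^*$ be defined by $\varphi_i([\epsilon]) = [\epsilon] + e_i$. Then for every $k \in [0,n]$, $H_k \subset F_k$ is a seminormal C-monoid and: (1) If $e_k \notin \mathcal C_H$, then $H_k = H^{\times}$. If $e_k \in \mathcal C_H$, then $\mathcal C(H_k,F_k) \cong \mathcal C_k$ if $\varphi_k$ is injective, and $\mathcal C(H_k,F_k) \cong \mathcal C_{F^{\times}}(H,F)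 \cup \mathcal C_k$ (a subsemigroup of $\mathcal C$) if $\varphi_k$ is not injective. In particular, $\mathcal C(H_0,F_0) \cong \mathcal C_0$, and if $\mathcal C(H_k,F_k)$ is a group, then $H_k$ is a Krull monoid. (2) If $e_k \in \mathcal C_H$, then there is a transfer homomorphism $\theta_k \colon H_k \to \mathcal B\big(\mathcal C_k^*/\varphi_k(\mathcal C_{F^{\times}}(H,F))\big)$.
   Context: All semigroups are commutative with identity; a monoid is a cancellative such semigroup; $H^{\times}$ is the unit group, $\mathsf q(H)$ the quotient group, and $[a,b]$ denotes the set of integers between $a$ and $b$. A factorial monoid is $F = F^{\times} \times \mathcal F(P)$ with $\mathcal F(P)$ the free abelian monoid on the set $P$ of primes; $\mathsf v_p$ is the $p$-adic exponent. For a submonoid $H \subset F$, $y \sim y'$ ($H$-equivalence) if for all $x \in F$: $xy \in H \iff xy' \in H$; $[y]$ is the class of $y$; $\mathcal C(H,F) = \{[y] \mid y \in F\}$ is the class semigroup (additive, identity $[1]$), $\mathcal C^*(H,F) = \{[y] \mid y \in (F\setminus F^{\times}) \cup \{1\}\}$ the reduced class semigroup. $H$ is a C-monoid (in $F$) if $H^{\times} = H \cap F^{\times}$ and $\mathcal C^*(H,F)$ is finite; $H$ is dense in $F$ if $\mathsf v_p(H)$ is a numerical monoid for every $p \in P$. $H$ is seminormal if every $x \in \mathsf q(H)$ with $x^n \in H$ for all sufficiently large $n$ lies in $H$. A Krull monoid is a completely integrally closed monoid satisfying the ACC on divisorial ideals. For an idempotent $e$ of a commutative semigroup $\mathcal C$,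 the constituent group is $\mathcal C_e = \{x \in \mathcal C \mid x+e = x \text{ and } x+y = e \text{ for some } y \in \mathcal C\}$. For a finite abelian group $G$, $\mathcal B(G)$ is the monoid of all sequences (elements of the free abelian monoid $\mathcal F(G)$) whose terms sum to $0$. A monoid homomorphism $\theta \colon H \to B$ is a transfer homomorphism if (T1) $B = \theta(H)B^{\times}$ and $\theta^{-1}(B^{\times}) = H^{\times}$, and (T2) whenever $u \in H$, $b,c \in B$ and $\theta(u) = bc$, there exist $v,w \in H$ with $u = vw$, $\theta(v)B^{\times} = bB^{\times}$ and $\theta(w)B^{\times} = cB^{\times}$. *)

From HB Require Import structures.
From mathcomp Require Import all_boot all_order all_algebra.
From mathcomp Require Import finmap multiset.
From Stdlib Require List.
Set Implicit Arguments. Unset Strict Implicit. Unset Printing Implicit Defensive.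
Import GRing.Theory.
Local Open Scope mset_scope.

(* The factorial monoid  F = F^x * F(P).  F^x is an (additively written)     *)
(* abelian group V, F(P) is the free abelian monoid {mset P} on P.           *)
(* A "monoid" inside F is a predicate on the carrier type FF V P.            *)
Section Factorial.
Variables (V : zmodType) (P : choiceType).

Definition FF : Type := (V * multiset P)%type.

Definition fmul (x y : FF) : FF := ((x.1 + y.1)%R, msetD x.2 y.2).
Definition fone : FF := (0%R, mset0).
Definition fexp (x : FF) (n : nat) : FF := iter n (fmul x) fone.

Definition prime_el (p : P) : FF := (0%R, [mset p]).

Definition vp (p : P) (x : FF) : nat := x.2 p.

Definition Fall : FF -> Prop := fun _ => True.

Definition Fsub (Q : P -> Prop) : FF -> Prop :=
  fun x => forall p, (0 < x.2 p)%N -> Q p.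

Definition unitIn (M : FF -> Prop) (x : FF) : Prop :=
  M x /\ exists y, M y /\ fmul x y = fone.

Definition submonoid (Fk H : FF -> Prop) : Prop :=
  (forall x, H x -> Fk x) /\ H fone /\ (forall x y, H x -> H y -> H (fmul x y)).

Definition finite_set (T : Type) (S : T -> Prop) : Prop :=
  exists s : seq T, forall x, S x -> List.In x s.

Definition Hequiv (Fk H : FF -> Prop) (y y' : FF) : Prop :=
  forall x, Fk x -> (H (fmul x y) <-> H (fmul x y')).

Definition cls (Fk H : FF -> Prop) (y : FF) : FF -> Prop :=
  fun z => Fk z /\ Hequiv Fk H y z.

Definition classes (Fk H : FF -> Prop) : (FF -> Prop) -> Prop :=
  fun c => exists y, Fk y /\ c = cls Fk H y.

Definition red_classes (Fk H : FF -> Prop) : (FF -> Prop) -> Prop :=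
  fun c => exists y, ((Fk y /\ ~ unitIn Fk y) \/ y = fone) /\ c = cls Fk H y.

Definition cadd (Fk H : FF -> Prop) (A B : FF -> Prop) : FF -> Prop :=
  fun z => exists a b, A a /\ B b /\ cls Fk H (fmul a b) z.

Definition constituent (Fk H : FF -> Prop) (S : (FF -> Prop) -> Prop)
    (e : FF -> Prop) : (FF -> Prop) -> Prop :=
  fun x => S x /\ cadd Fk H x e = x /\ exists y, S y /\ cadd Fk H x y = e.

Definition classes_H (Fk H : FF -> Prop) : (FF -> Prop) -> Prop :=
  fun c => exists y, H y /\ c = cls Fk H y.

Definition classes_units (Fk H : FF -> Prop) : (FF -> Prop) -> Prop :=
  fun c => exists y, unitIn Fk y /\ c = cls Fk H y.

Fixpoint csum (Fk H : FF -> Prop) (e : nat -> FF -> Prop) (m : nat) : FF -> Prop :=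
  match m with
  | 0 => e 0
  | m'.+1 => cadd Fk H (csum Fk H e m') (e m'.+1)
  end.

(* x = a b^{-1} in q(H) (a, b in H);  x^n in H  iff  a^n = c b^n for some c in H *)
Definition seminormal (H : FF -> Prop) : Prop :=
  forall a b, H a -> H b ->
    (exists N, forall n, (N <= n)%N -> exists c, H c /\ fexp a n = fmul c (fexp b n)) ->
    exists c, H c /\ a = fmul c b.

Definition C_monoid (Fk H : FF -> Prop) : Prop :=
  submonoid Fk H /\
  (forall x, H x -> (unitIn H x <-> unitIn Fk x)) /\
  finite_set (red_classes Fk H).

(* v_p(H) is a numerical monoid (finite complement in N) for every prime p *)
Definition dense (H : FF -> Prop) : Prop :=
  forall p : P, exists N, forall m, (N <= m)%N -> exists h, H h /\ vp p h = m.

(* completely integrally closed: x = a/b in q(H), c in H, c x^n in H for all n *)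
Definition compl_int_closed (H : FF -> Prop) : Prop :=
  forall a b c, H a -> H b -> H c ->
    (forall n, exists d, H d /\ fmul c (fexp a n) = fmul d (fexp b n)) ->
    exists d, H d /\ a = fmul d b.

Definition s_ideal (H : FF -> Prop) (I : FF -> Prop) : Prop :=
  (forall x, I x -> H x) /\ (forall x h, I x -> H h -> I (fmul x h)).

(* x = u/w (u, w in H) lies in I^{-1} = (H : I) *)
Definition in_inv (H I : FF -> Prop) (u w : FF) : Prop :=
  forall c, I c -> exists d, H d /\ fmul u c = fmul d w.

(* y in H lies in I_v = (I^{-1})^{-1} *)
Definition in_v (H I : FF -> Prop) (y : FF) : Prop :=
  forall u w, H u -> H w -> in_inv H I u w ->
    exists d, H d /\ fmul y u = fmul d w.

Definition divisorial (H I : FF -> Prop) : Prop :=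
  s_ideal H I /\ forall y, H y -> in_v H I y -> I y.

Definition ACC_divisorial (H : FF -> Prop) : Prop :=
  forall a : nat -> FF -> Prop,
    (forall m, divisorial H (a m)) ->
    (forall m x, a m x -> a m.+1 x) ->
    exists N, forall m x, (N <= m)%N -> a m x -> a N x.

Definition Krull (H : FF -> Prop) : Prop :=
  compl_int_closed H /\ ACC_divisorial H.

End Factorial.
Arguments Fall V P _ : clear implicits.
Arguments Fsub V P Q _ : clear implicits.

Definition sg_iso (T1 T2 : Type) (S1 : T1 -> Prop) (op1 : T1 -> T1 -> T1)
    (S2 : T2 -> Prop) (op2 : T2 -> T2 -> T2) : Prop :=
  exists f : T1 -> T2,
    (forall x, S1 x -> S2 (f x)) /\
    (forall y, S2 y -> exists x, S1 x /\ f x = y) /\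
    (forall x y, S1 x -> S1 y -> f x = f y -> x = y) /\
    (forall x y, S1 x -> S1 y -> f (op1 x y) = op2 (f x) (f y)).

(* the monoid F(G) = {ffun G -> nat} of sequences over a finite abelian group,
   and the monoid B(G) of zero-sum sequences *)
Definition seqD (G : finZmodType) (b c : {ffun G -> nat}) : {ffun G -> nat} :=
  [ffun g => (b g + c g)%N].
Definition seq0 (G : finZmodType) : {ffun G -> nat} := [ffun _ => 0%N].
Definition zero_sum (G : finZmodType) (b : {ffun G -> nat}) : Prop :=
  (\sum_(g : G) g *+ b g)%R = 0%R.

(* transfer homomorphism theta : H -> B(G); B(G)^x = {1} *)
Definition transfer_hom (V : zmodType) (P : choiceType) (G : finZmodType)
    (H : FF V P -> Prop) (theta : FF V P -> {ffun G -> nat}) : Prop :=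
  (forall u, H u -> zero_sum (theta u)) /\
  theta (fone V P) = seq0 G /\
  (forall u v, H u -> H v -> theta (fmul u v) = seqD (theta u) (theta v)) /\
  (forall b, zero_sum b -> exists u, H u /\ theta u = b) /\
  (forall u, H u -> (theta u = seq0 G <-> unitIn H u)) /\
  (forall u b c, H u -> zero_sum b -> zero_sum c -> theta u = seqD b c ->
     exists v w, H v /\ H w /\ u = fmul v w /\ theta v = b /\ theta w = c).

Definition sg_group (T : Type) (S : T -> Prop) (op : T -> T -> T) : Prop :=
  exists u, S u /\ (forall x, S x -> op x u = x) /\
    (forall x, S x -> exists y, S y /\ op x y = u).

Section Pieces.
Variables (V : zmodType) (P : choiceType) (H : FF V P -> Prop) (e : nat -> FF V P -> Prop).

Definition Ck (k : nat) := constituent (Fall V P) H (classes (Fall V P) H) (e k).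
Definition Cks (k : nat) := constituent (Fall V P) H (red_classes (Fall V P) H) (e k).
Definition Pk (k : nat) : P -> Prop := fun p => Cks k (cls (Fall V P) H (prime_el V p)).
Definition Fk (k : nat) : FF V P -> Prop := Fsub V P (Pk k).
Definition Hk (k : nat) : FF V P -> Prop := fun x => Fk k x /\ H x.
Definition phik (k : nat) (c : FF V P -> Prop) : FF V P -> Prop :=
  cadd (Fall V P) H c (e k).
Definition phik_injective (k : nat) : Prop :=
  forall c1 c2, classes_units (Fall V P) H c1 -> classes_units (Fall V P) H c2 ->
    phik k c1 = phik k c2 -> c1 = c2.
End Pieces.

(* Every class of C^* contains a prime; in particular [1] = [q] for a prime q,
   so C = C^* and every idempotent e_k is the class [r] of a prime r.  A
   non-unit of F_k is a product of primes of P_k, so its class lies in the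
   finite group C_k and has finite order there; consequently every a in H
   with [a] in C_k satisfies a ~ r.  These two facts compare H_k-equivalence
   on F_k with H-equivalence: y ~_k y' gives y r ~ y' r, with the converse
   when phi_k is injective, and gives y ~ y' itself when phi_k is not
   injective (some unit d outside H then satisfies d r ~ r).  If C(H_k, F_k) is a group, H_k is saturated
   in F_k and hence Krull.  Finally, the classes of C_k modulo units form the
   finite group G, and counting the primes of an element of H_k according to
   their class in G is a transfer homomorphism H_k -> B(G). *)

From HB Require Import structures.
From mathcomp Require Import all_boot all_order all_algebra.
From mathcomp Require Import finmap multiset.
From mathcomp Require Import zify.
From Stdlib Require Import Classical ClassicalDescription FunctionalExtensionality PropExtensionality.
From Stdlib Require List.
Set Implicit Arguments. Unset Strict Implicit. Unset Printing Implicit Defensive.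

Import GRing.Theory.
Local Open Scope mset_scope.

Definition asbool (Q : Prop) : bool :=
  if excluded_middle_informative Q then true else false.

Lemma asboolP (Q : Prop) : reflect Q (asbool Q).
Proof. by rewrite /asbool; case: excluded_middle_informative => h; constructor. Qed.

Lemma pigeonhole_seq (T : Type) (s : list T) (f : nat -> T) :
  (forall i, List.In (f i) s) -> exists i j, (i < j)%N /\ f i = f j.
Proof.
elim: s f => [|x s IH] f hf; first by case: (hf 0).
have [[i0 hi0]|no_x] := classic (exists i, f i = x); last first.
  by apply: IH => i; case: (hf i) => // h; case: no_x; exists i.
have [[j hj]|no_x'] := classic (exists j, f (i0 + 1 + j)%N = x).
  by exists i0, (i0 + 1 + j)%N; split; [lia | rewrite hi0 hj].
have [i [j [hij eij]]] : exists i j, (i < j)%N /\ f (i0 + 1 + i)%N = f (i0 + 1 + j)%N.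
  apply: (IH (fun j => f (i0 + 1 + j)%N)) => j.
  by case: (hf (i0 + 1 + j)%N) => // h; case: no_x'; exists j.
by exists (i0 + 1 + i)%N, (i0 + 1 + j)%N; split => //; lia.
Qed.

Lemma enum_msetD (T : choiceType) (A B : {mset T}) :
  perm_eq (enum_mset (A `+` B)) (enum_mset A ++ enum_mset B).
Proof. by apply/allP => a _ /=; rewrite count_cat !count_mem_mset msetE2. Qed.

Lemma seq_mset_nil (T : choiceType) : seq_mset [::] = (mset0 : {mset T}).
Proof. by apply/msetP => x; rewrite mset_seqE mset0E. Qed.

Lemma seq_mset_eq0 (T : choiceType) (s : seq T) : seq_mset s = mset0 -> s = [::].
Proof.
by move=> h; have := perm_size (perm_eq_seq_mset s); rewrite h enum_mset0; case: s {h}.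
Qed.

Section FactorialMonoid.
Variables (V : zmodType) (P : choiceType).
Local Notation FF := (FF V P).
Local Notation fmul := (@fmul V P).
Local Notation fone := (@fone V P).

Lemma FF_eq (x y : FF) : x.1 = y.1 -> x.2 = y.2 -> x = y.
Proof. by case: x; case: y => /= ? ? ? ? -> ->. Qed.

Lemma fmulC (x y : FF) : fmul x y = fmul y x.
Proof. by congr pair; [apply: addrC | apply: msetDC]. Qed.
Lemma fmulA (x y z : FF) : fmul x (fmul y z) = fmul (fmul x y) z.
Proof. by congr pair; [apply: addrA | apply: msetDA]. Qed.
Lemma fmul1r (x : FF) : fmul x fone = x.
Proof. by apply: FF_eq; rewrite /= ?addr0 ?msetD0. Qed.
Lemma fmul1l (x : FF) : fmul fone x = x.
Proof. by rewrite fmulC fmul1r. Qed.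
Lemma fmulAC (x y z : FF) : fmul (fmul x y) z = fmul (fmul x z) y.
Proof. by rewrite -!fmulA (fmulC y). Qed.
Lemma fmulCA (x y z : FF) : fmul x (fmul y z) = fmul y (fmul x z).
Proof. by rewrite !fmulA (fmulC x). Qed.

Lemma vp_fmul (x y : FF) p : (fmul x y).2 p = (x.2 p + y.2 p)%N.
Proof. by rewrite /fmul /= msetE2. Qed.

Definition funit (x : FF) : Prop := x.2 = mset0.
(* Inverts only the unit part: the inverse of x when funit x. *)
Definition finv (x : FF) : FF := ((- x.1)%R, mset0).

Lemma fmulVf (x : FF) : funit x -> fmul (finv x) x = fone.
Proof. by move=> h; apply: FF_eq; rewrite /= ?addNr // h msetD0. Qed.

Lemma funit_finv x : funit (finv x). Proof. by []. Qed.

Lemma funitM (x y : FF) : funit (fmul x y) <-> funit x /\ funit y.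
Proof.
rewrite /funit; split; last by case=> hx hy; rewrite /= hx hy msetD0.
move=> /msetP e; split; apply/msetP => p; move: (e p);
  by rewrite /= msetE2 !mset0E; lia.
Qed.

Lemma nonfunitMr (x y : FF) : ~ funit x -> ~ funit (fmul x y).
Proof. by move=> h /funitM []. Qed.

Lemma unitIn_FallP (x : FF) : unitIn (Fall V P) x <-> funit x.
Proof.
split; last by move=> h; split => //; exists (finv x); rewrite fmulC fmulVf.
case=> _ [y [_ e]]; have /funitM [] // : funit (fmul x y) by rewrite e.
Qed.

Lemma prime_el_nonfunit p : ~ funit (prime_el V p).
Proof. by move/msetP/(_ p); rewrite msetnxx mset0E. Qed.

Lemma FsubM Q (x y : FF) : Fsub V P Q x -> Fsub V P Q y -> Fsub V P Q (fmul x y).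
Proof. by move=> hx hy p; rewrite vp_fmul addn_gt0 => /orP [] ?; [apply: hx | apply: hy]. Qed.
Lemma Fsub_funit Q (x : FF) : funit x -> Fsub V P Q x.
Proof. by move=> h p; rewrite h mset0E. Qed.
Lemma FsubMl Q (x y : FF) : Fsub V P Q (fmul x y) -> Fsub V P Q x.
Proof. by move=> h p hp; apply: h; rewrite vp_fmul ltn_addr. Qed.
Lemma Fsub_prime_el Q p : Q p -> Fsub V P Q (prime_el V p).
Proof. by move=> hq p'; rewrite /= msetnE; case: eqP => // ->. Qed.
Lemma Fsub_seq_mset Q v (s : seq P) : (forall p, p \in s -> Q p) -> Fsub V P Q (v, seq_mset s).
Proof. by move=> hs p /=; rewrite mset_seqE -has_count has_pred1; apply: hs. Qed.
Lemma Fsub_enum_mset Q (x : FF) p : Fsub V P Q x -> p \in enum_mset x.2 -> Q p.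
Proof. by move=> hx hp; apply: hx; rewrite -in_mset. Qed.

Lemma unitIn_FsubP Q (x : FF) : unitIn (Fsub V P Q) x <-> funit x.
Proof.
split=> [[_ [y [_ xy1]]]|ux]; first by have /funitM [] : funit (fmul x y) by rewrite xy1.
split; first exact: Fsub_funit.
by exists (finv x); split; [apply: Fsub_funit | rewrite fmulC fmulVf].
Qed.

Lemma fexpS (x : FF) n : fexp x n.+1 = fmul x (fexp x n). Proof. by []. Qed.
Lemma vp_fexp (x : FF) n p : (fexp x n).2 p = (n * x.2 p)%N.
Proof. by elim: n => [|n IH]; rewrite ?mset0E // fexpS vp_fmul IH mulSn. Qed.
Lemma fexpMn (x y : FF) n : fexp (fmul x y) n = fmul (fexp x n) (fexp y n).
Proof.
elim: n => [|n IH]; first by rewrite fmul1r.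
by rewrite !fexpS IH -!fmulA (fmulCA y).
Qed.
Lemma fexpD (x : FF) a b : fexp x (a + b) = fmul (fexp x a) (fexp x b).
Proof. by elim: a => [|a IH]; rewrite ?fmul1l // addSn !fexpS IH fmulA. Qed.

Definition fdiv (b a : FF) : FF := ((b.1 - a.1)%R, b.2 `\` a.2).

Lemma fdivK (a b : FF) : (forall p, a.2 p <= b.2 p)%N -> b = fmul a (fdiv b a).
Proof.
move=> h; apply: FF_eq; first by rewrite /= addrC subrK.
by apply/msetP => p; rewrite /= !msetE2 subnKC.
Qed.

Lemma Fsub_fdiv Q (a b : FF) : Fsub V P Q b -> Fsub V P Q (fdiv b a).
Proof. by move=> hb p; rewrite /= msetE2 => hp; apply: hb; lia. Qed.

Lemma seminormal_Fsub Q (H : FF -> Prop) :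
  seminormal H -> seminormal (fun x => Fsub V P Q x /\ H x).
Proof.
move=> snH a b [Qa Ha] [Qb Hb] [N hN].
have [c [Hc eab]] : exists c, H c /\ a = fmul c b.
  by apply: snH => //; exists N => m /hN [c [[_ Hc] ec]]; exists c.
by exists c; do !split => //; apply: FsubMl (_ : Fsub V P Q (fmul c b)); rewrite -eab.
Qed.

End FactorialMonoid.

Section Equivalence.
Variables (V : zmodType) (P : choiceType) (Fk H : FF V P -> Prop).
Local Notation FF := (FF V P).
Local Notation fmul := (@fmul V P).
Local Notation fone := (@fone V P).
Local Notation equiv := (Hequiv Fk H).
Local Notation cls := (cls Fk H).
Hypothesis FkM : forall x y, Fk x -> Fk y -> Fk (fmul x y).

Lemma Hequiv_sym y y' : equiv y y' -> equiv y' y.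
Proof. by move=> h x hx; apply: iff_sym (h x hx). Qed.
Lemma Hequiv_trans y1 y2 y3 : equiv y1 y2 -> equiv y2 y3 -> equiv y1 y3.
Proof. by move=> h1 h2 x hx; apply: iff_trans (h1 x hx) (h2 x hx). Qed.

Lemma Hequiv_mull a y y' : Fk a -> equiv y y' -> equiv (fmul a y) (fmul a y').
Proof. by move=> ha h x hx; rewrite !fmulA; apply/h/FkM. Qed.
Lemma Hequiv_mulr a y y' : Fk a -> equiv y y' -> equiv (fmul y a) (fmul y' a).
Proof. by move=> ha h; rewrite !(fmulC _ a); apply: Hequiv_mull. Qed.
Lemma Hequiv_mul a a' b b' : Fk a' -> Fk b -> equiv a a' -> equiv b b' ->
  equiv (fmul a b) (fmul a' b').
Proof.
by move=> ha hb h1 h2; apply: Hequiv_trans (Hequiv_mulr hb h1) (Hequiv_mull ha h2).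
Qed.

Lemma Hequiv_H y y' : Fk fone -> equiv y y' -> H y -> H y'.
Proof. by move=> Fk1 h; move: (h fone Fk1); rewrite !fmul1l => -[]. Qed.

Lemma Hequiv_cls y y' : equiv y y' -> cls y = cls y'.
Proof.
move=> h; apply: functional_extensionality => z; apply: propositional_extensionality.
by split; case=> hz h'; split => //; [apply: Hequiv_trans (Hequiv_sym h) h' | apply: Hequiv_trans h h'].
Qed.

Lemma cls_Hequiv y y' : Fk y' -> cls y = cls y' -> equiv y y'.
Proof. by move=> hy' e; have : cls y' y' by []; rewrite -e => -[]. Qed.

Lemma cadd_cls a b : Fk a -> Fk b -> cadd Fk H (cls a) (cls b) = cls (fmul a b).
Proof.
move=> ha hb; apply: functional_extensionality => z; apply: propositional_extensionality.
split; last by move=> hz; exists a, b.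
case=> a' [b' [[ha' e1] [[hb' e2] hz]]].
by rewrite (Hequiv_cls (Hequiv_mul ha' hb e1 e2)).
Qed.

Lemma sg_iso_classes (S2 : (FF -> Prop) -> Prop) op2 (g : FF -> FF -> Prop) :
  (forall y, Fk y -> S2 (g y)) ->
  (forall d, S2 d -> exists2 y, Fk y & g y = d) ->
  (forall y y', Fk y -> Fk y' -> equiv y y' <-> g y = g y') ->
  (forall y y', Fk y -> Fk y' -> g (fmul y y') = op2 (g y) (g y')) ->
  sg_iso (classes Fk H) (cadd Fk H) S2 op2.
Proof.
move=> gS2 g_onto g_inj g_mul.
pose f (c : FF -> Prop) z := exists y, c y /\ g y z.
have fE y : Fk y -> f (cls y) = g y.
  move=> hy; apply: functional_extensionality => z; apply: propositional_extensionality.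
  split; last by move=> hz; exists y.
  by case=> y' [[hy' /(g_inj _ _ hy hy') ->]].
exists f; split; [|split; [|split]].
- by move=> _ [y [hy ->]]; rewrite fE //; apply: gS2.
- by move=> d /g_onto [y hy <-]; exists (cls y); split; [exists y | apply: fE].
- move=> _ _ [y [hy ->]] [y' [hy' ->]]; rewrite !fE // => /(g_inj _ _ hy hy').
  exact: Hequiv_cls.
- move=> _ _ [y [hy ->]] [y' [hy' ->]].
  by rewrite cadd_cls // !fE ?g_mul //; apply: FkM.
Qed.

End Equivalence.

Lemma monotone_stabilize (I : eqType) (Q : I -> nat -> Prop) :
  (forall i m, Q i m -> Q i m.+1) -> forall (s : seq I) m0,
  exists N, (m0 <= N)%N /\ forall i, i \in s -> forall m, (N <= m)%N -> Q i m -> Q i N.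
Proof.
move=> hQ; have mono i m m' : (m <= m')%N -> Q i m -> Q i m'.
  by move/subnKC <-; elim: (m' - m)%N => [|d IH]; rewrite ?addn0 // addnS => /IH /hQ.
elim=> [|i s IH] m0; first by exists m0.
have [N1 [hN1 hs]] := IH m0.
have [[t ht]|no_t] := classic (exists t, Q i t).
- exists (maxn N1 t); split; first by rewrite leq_max hN1.
  move=> j; rewrite inE => /orP [/eqP -> m _ _|hj m hm hq].
    by apply: mono ht; rewrite leq_maxr.
  apply: (mono _ N1); first by rewrite leq_maxl.
  by apply: (hs j hj m) => //; apply: leq_trans hm; rewrite leq_maxl.
- exists N1; split => // j; rewrite inE => /orP [/eqP -> m _ hq|hj]; last exact: hs.
  by case: no_t; exists m.
Qed.

Section SaturatedKrull.
Variables (V : zmodType) (P : choiceType) (Q : P -> Prop) (S : FF V P -> Prop).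
Local Notation FF := (FF V P).
Local Notation fmul := (@fmul V P).
Local Notation FQ := (Fsub V P Q).
Hypothesis S_sub : forall x, S x -> FQ x.
Hypothesis SM : forall x y, S x -> S y -> S (fmul x y).
Hypothesis S_saturated : forall a c, S a -> FQ c -> S (fmul a c) -> S c.

Lemma saturated_fdiv a b : S a -> S b -> (forall p, a.2 p <= b.2 p)%N ->
  S (fdiv b a) /\ b = fmul a (fdiv b a).
Proof.
move=> Sa Sb /fdivK eb; split => //.
by apply: (S_saturated Sa); [apply: Fsub_fdiv; apply: S_sub Sb | rewrite -eb].
Qed.

Lemma saturated_cic : compl_int_closed S.
Proof.
move=> a b c Sa Sb Sc h.
have le_ba p : (b.2 p <= a.2 p)%N.
  rewrite leqNgt; apply/negP => lt_ab.
  have [m lt_cm] : exists m, (c.2 p < m)%N by exists (c.2 p).+1.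
  have [d [_ ecd]] := h m.
  have := f_equal (fun z : FF => z.2 p) ecd; rewrite !vp_fmul !vp_fexp.
  have : (m * (a.2 p).+1 <= m * b.2 p)%N by rewrite leq_mul2l lt_ab orbT.
  by rewrite mulnS; move: (m * a.2 p)%N (m * b.2 p)%N => X Y; lia.
have [Sd ed] := saturated_fdiv Sb Sa le_ba.
by exists (fdiv a b); rewrite fmulC.
Qed.

Lemma saturated_divisorial_mem (I : FF -> Prop) y : divisorial S I -> S y ->
  (forall p, exists c, I c /\ (c.2 p <= y.2 p)%N) -> I y.
Proof.
move=> [[IS IM] Iv] Sy hI; apply: Iv => // u w Su Sw u_w.
have le_w p : (w.2 p <= (fmul y u).2 p)%N.
  have [c [Ic le_cy]] := hI p; have [d [_ ed]] := u_w c Ic.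
  by have := f_equal (fun z : FF => z.2 p) ed; rewrite !vp_fmul; lia.
have [Sd ed] := saturated_fdiv Sw (SM Sy Su) le_w.
by exists (fdiv (fmul y u) w); rewrite [RHS]fmulC.
Qed.

(* By [saturated_divisorial_mem] an ideal of the chain is determined by the
   smallest p-adic values of its elements.  Below those of a fixed element w
   only the finitely many pairs (p, j) with j <= v_p(w) matter. *)
Lemma saturated_ACC : ACC_divisorial S.
Proof.
move=> a a_div a_incr.
have [[m0 [w hw]]|a_empty] := classic (exists m0 w, a m0 w); last first.
  by exists 0%N => m x _ hx; case: a_empty; exists m, x.
have mono m m' x : (m <= m')%N -> a m x -> a m' x.
  by move/subnKC <-; elim: (m' - m)%N => [|d IH]; rewrite ?addn0 // addnS => /IH /a_incr.
pose R (pj : P * nat) m := exists c, a m c /\ (c.2 pj.1 <= pj.2)%N.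
have R_incr pj m : R pj m -> R pj m.+1 by case=> c [hc hcp]; exists c; split => //; apply: a_incr.
pose pairs := [seq (p, j) | p <- enum_mset w.2, j <- seq.iota 0 (w.2 p).+1].
have [N [le_m0N hN]] := monotone_stabilize R_incr pairs m0.
exists N => m y le_Nm hy.
have Sy : S y by have [[IS _] _] := a_div m; apply: IS.
apply: saturated_divisorial_mem => // p.
have [le_wy|lt_yw] := leqP (w.2 p) (y.2 p).
  by exists w; split => //; apply: mono hw.
have [|c [hc hcp]] := hN (p, y.2 p) _ m le_Nm (ex_intro _ y (conj hy (leqnn _))).
  apply/allpairsPdep; exists p, (y.2 p); rewrite in_mset mem_iota; split => //; lia.
by exists c.
Qed.

Lemma saturated_Krull : Krull S.
Proof. by split; [apply: saturated_cic | apply: saturated_ACC]. Qed.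

End SaturatedKrull.

(* The group laws are packed in a record so that the zmodType instance can be
   declared once, outside the section where the operations are constructed. *)
Record ord_zmod := OrdZmod {
  oz_size : nat;
  oz_zero : 'I_oz_size;
  oz_opp : 'I_oz_size -> 'I_oz_size;
  oz_add : 'I_oz_size -> 'I_oz_size -> 'I_oz_size;
  oz_addA : associative oz_add;
  oz_addC : commutative oz_add;
  oz_add0 : left_id oz_zero oz_add;
  oz_addN : left_inverse oz_zero oz_opp oz_add }.

Definition oz_sort (D : ord_zmod) : Type := 'I_(oz_size D).
HB.instance Definition _ (D : ord_zmod) := Finite.on (oz_sort D).
HB.instance Definition _ (D : ord_zmod) :=
  GRing.isZmodule.Build (oz_sort D) (@oz_addA D) (@oz_addC D) (@oz_add0 D) (@oz_addN D).

Lemma oz_addE (D : ord_zmod) (x y : oz_sort D) : (x + y)%R = oz_add x y.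
Proof. by []. Qed.

Lemma finite_transversal (T : Type) (R : T -> T -> Prop) (A : T -> Prop) (x0 : T) (s : list T) :
  (forall x, R x x) -> (forall x y, R x y -> R y x) ->
  exists L : seq T,
    [/\ forall i, (i < size L)%N -> A (nth x0 L i),
        forall y, List.In y s -> A y -> exists2 i, (i < size L)%N & R (nth x0 L i) y
      & forall i j, (i < size L)%N -> (j < size L)%N -> R (nth x0 L i) (nth x0 L j) -> i = j].
Proof.
move=> Rxx Rsym; elim: s => [|y s [L [LA Ls Luniq]]]; first by exists [::].
have [[Ay new_y]|old_y] := classic (A y /\ ~ exists2 i, (i < size L)%N & R (nth x0 L i) y).
- exists (y :: L); split.
  + by case=> [|i] //= hi; apply: LA.
  + move=> y' [<-|hin] Ay'; first by exists 0%N; last apply: Rxx.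
    by have [i hi Ri] := Ls y' hin Ay'; exists i.+1.
  + case=> [|i] [|j] //= hi hj Rij.
    * by case: new_y; exists j => //; apply: Rsym.
    * by case: new_y; exists i.
    * by rewrite (Luniq i j).
- exists L; split => // y' [<-|hin] Ay'; last exact: Ls.
  by apply: NNPP => no_i; apply: old_y; split => // -[i hi Ri]; apply: no_i; exists i.
Qed.

Section Counting.
Variables (T : eqType) (G : finZmodType) (f : T -> G).

Definition fcount (s : seq T) : {ffun G -> nat} :=
  [ffun g => count (fun p => f p == g) s].

Lemma fcount_perm s s' : perm_eq s s' -> fcount s = fcount s'.
Proof. by move/permP => h; apply/ffunP => g; rewrite !ffunE h. Qed.
Lemma fcount_cat s s' : fcount (s ++ s') = seqD (fcount s) (fcount s').
Proof. by apply/ffunP => g; rewrite !ffunE count_cat. Qed.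
Lemma fcount_nil : fcount [::] = seq0 G.
Proof. by apply/ffunP => g; rewrite !ffunE. Qed.
Lemma fcount_cons a s g : fcount (a :: s) g = ((f a == g) + fcount s g)%N.
Proof. by rewrite !ffunE. Qed.

Lemma fcount_split s b c : fcount s = seqD b c ->
  exists s1 s2, perm_eq s (s1 ++ s2) /\ fcount s1 = b /\ fcount s2 = c.
Proof.
elim: s b c => [|a s IH] b c /ffunP hbc.
  exists [::], [::]; split => //; split; apply/ffunP => g;
  by move: (hbc g); rewrite !ffunE /=; lia.
pose dec (d : {ffun G -> nat}) := [ffun g => d g - (f a == g)]%N.
have hg g : ((f a == g) + fcount s g = b g + c g)%N by rewrite -fcount_cons hbc ffunE.
have [b0|b_pos] := posnP (b (f a)).
- have c_pos : (0 < c (f a))%N by move: (hg (f a)); rewrite eqxx b0; lia.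
  have [|s1 [s2 [hp [h1 /ffunP h2]]]] := IH b (dec c).
    by apply/ffunP => g; move: (hg g); rewrite !ffunE; case: eqP => [<-|] /=; lia.
  exists s1, (a :: s2); split; [|split => //].
    by rewrite perm_sym -cat1s perm_catCA /= perm_cons perm_sym.
  by apply/ffunP => g; rewrite fcount_cons h2 ffunE; case: eqP => [<-|] /=; lia.
- have [|s1 [s2 [hp [/ffunP h1 h2]]]] := IH (dec b) c.
    by apply/ffunP => g; move: (hg g); rewrite !ffunE; case: eqP => [<-|] /=; lia.
  exists (a :: s1), s2; split; [by rewrite /= perm_cons | split => //].
  by apply/ffunP => g; rewrite fcount_cons h1 ffunE; case: eqP => [<-|] /=; lia.
Qed.

Lemma fcount_onto (A : T -> Prop) : (forall g, exists p, A p /\ f p = g) ->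
  forall b, exists s, (forall p, p \in s -> A p) /\ fcount s = b.
Proof.
move=> f_onto b; have [h hP] := fin_all_exists f_onto.
exists (flatten [seq nseq (b g) (h g) | g <- index_enum G]); split.
  by move=> p /flattenP [t /mapP [g _ ->]] /nseqP [-> _]; case: (hP g).
apply/ffunP => g'; rewrite ffunE count_flatten -map_comp.
under eq_map => g do rewrite /= count_nseq (proj2 (hP g)).
rewrite sumn_map (bigD1 g') //= eqxx mul1n big1 ?addn0 // => g /negbTE.
by rewrite eq_sym => ->.
Qed.

Lemma sum_fcount s :
  (\sum_(g : G) g *+ fcount s g)%R = (\sum_(p <- s) f p)%R.
Proof.
elim: s => [|a s IH]; first by rewrite big_nil big1 // => g _; rewrite ffunE.
rewrite big_cons -IH; under eq_bigr => g _ do rewrite fcount_cons mulrnDr.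
rewrite big_split /= (bigD1 (f a)) //= eqxx big1 ?addr0 // => g /negbTE.
by rewrite eq_sym => ->.
Qed.

End Counting.

Section ConstituentGroup.
Variables (V : zmodType) (P : choiceType) (H : FF V P -> Prop) (e : nat -> FF V P -> Prop).
Local Notation FF := (FF V P).
Local Notation fmul := (@fmul V P).
Local Notation fone := (@fone V P).
Local Notation Fa := (Fall V P).
Local Notation eqF := (Hequiv Fa H).
Local Notation clsF := (cls Fa H).
Local Notation pr := (prime_el V).

Hypothesis H_Cmonoid : C_monoid Fa H.
Hypothesis red_class_prime : forall c, red_classes Fa H c -> exists p, c (pr p).

Lemma H1 : H fone. Proof. by case: H_Cmonoid => [[_ []]]. Qed.
Lemma HM x y : H x -> H y -> H (fmul x y).
Proof. by case: H_Cmonoid => [[_ [_ HM]] _]; apply: HM. Qed.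
Lemma H_fexp x m : H x -> H (fexp x m).
Proof. by move=> Hx; elim: m => [|m IH]; [apply: H1 | rewrite fexpS; apply: HM]. Qed.

Lemma unitIn_HP u : H u -> unitIn H u <-> funit u.
Proof. by move=> Hu; case: H_Cmonoid => _ [hU _]; rewrite -unitIn_FallP; apply: hU. Qed.

Lemma eqF_mull a y y' : eqF y y' -> eqF (fmul a y) (fmul a y').
Proof. by apply: Hequiv_mull. Qed.
Lemma eqF_mulr a y y' : eqF y y' -> eqF (fmul y a) (fmul y' a).
Proof. by apply: Hequiv_mulr. Qed.
Lemma eqF_mul a a' b b' : eqF a a' -> eqF b b' -> eqF (fmul a b) (fmul a' b').
Proof. by apply: Hequiv_mul. Qed.
Lemma eqF_H y y' : eqF y y' -> H y -> H y'.
Proof. by apply: Hequiv_H. Qed.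
Lemma clsF_eqF y y' : clsF y = clsF y' -> eqF y y'.
Proof. by apply: cls_Hequiv. Qed.
Lemma caddF y y' : cadd Fa H (clsF y) (clsF y') = clsF (fmul y y').
Proof. by apply: cadd_cls. Qed.

Lemma H_funit_eqF1 u : H u -> funit u -> eqF u fone.
Proof.
move=> Hu /(unitIn_HP Hu) [_ [v [Hv uv1]]] x _; rewrite fmul1r.
by split => Hx; [rewrite -[x]fmul1r -uv1 fmulA | ]; apply: HM.
Qed.

(* [1] contains a prime q, so [y] = [y q] with y q not a unit. *)
Lemma clsF_red y : red_classes Fa H (clsF y).
Proof.
have [q [_ q1]] := red_class_prime (ex_intro _ fone (conj (or_intror erefl) erefl)).
exists (fmul y (pr q)); split.
  by left; split => // /unitIn_FallP; rewrite fmulC; apply/nonfunitMr/prime_el_nonfunit.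
by apply: Hequiv_cls; have := eqF_mull y q1; rewrite fmul1r.
Qed.

Lemma red_classesE : red_classes Fa H = classes Fa H.
Proof.
apply: functional_extensionality => c; apply: propositional_extensionality.
by split => -[y [_ ->]]; [exists y | apply: clsF_red].
Qed.

Lemma eqF_prime y : exists p, eqF y (pr p).
Proof. by have [p [_ h]] := red_class_prime (clsF_red y); exists p. Qed.

Lemma red_class_prime_cls c : red_classes Fa H c -> exists p, c = clsF (pr p).
Proof.
by move=> hc; have [p hp] := red_class_prime hc; exists p; case: hc hp => y [_ ->] [_ /Hequiv_cls].
Qed.

Lemma clsF_finite : exists s : seq (FF -> Prop), forall y, List.In (clsF y) s.
Proof. by case: H_Cmonoid => _ [_ [s hs]]; exists s => y; apply/hs/clsF_red. Qed.

Definition transfer_to_quotient (k : nat) : Prop :=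
  exists (G : finZmodType) (psi : (FF -> Prop) -> G),
    (forall g : G, exists x, Cks H e k x /\ psi x = g) /\
    (forall x y, Cks H e k x -> Cks H e k y ->
       psi (cadd Fa H x y) = (psi x + psi y)%R) /\
    (forall x, Cks H e k x ->
       (psi x = 0%R <-> exists c, classes_units Fa H c /\ x = phik H e k c)) /\
    exists theta : FF -> {ffun G -> nat}, transfer_hom (Hk H e k) theta.

Section Idempotent.
Variables (k : nat) (pk : P).
Hypothesis ek_cls : e k = clsF (pr pk).
Hypothesis ek_idem : cadd Fa H (e k) (e k) = e k.
Local Notation r := (pr pk).
Local Notation Fk := (Fk H e k).
Local Notation Hk := (Hk H e k).
Local Notation eqk := (Hequiv Fk Hk).
Local Notation clsk := (cls Fk Hk).

Lemma eqF_rr : eqF (fmul r r) r.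
Proof. by apply: clsF_eqF; rewrite -caddF -ek_cls. Qed.

Definition in_Ck y := eqF (fmul y r) y /\ exists z, eqF (fmul y z) r.

Lemma Ck_clsP y : Ck H e k (clsF y) <-> in_Ck y.
Proof.
rewrite /Ck /constituent ek_cls caddF; split.
  case=> _ [/clsF_eqF yr [_ [[z [_ ->]]]]]; rewrite caddF => /clsF_eqF yz.
  by split => //; exists z.
case=> yr [z yz]; split; first by exists y.
split; first exact: Hequiv_cls.
by exists (clsF z); split; [exists z | rewrite caddF; apply: Hequiv_cls].
Qed.

Lemma CksE : Cks H e k = Ck H e k.
Proof. by rewrite /Cks /Ck red_classesE. Qed.

Lemma Cks_clsF x : Cks H e k x -> exists2 a, x = clsF a & in_Ck a.
Proof. by rewrite CksE => hx; have [[a [_ ea]] _] := hx; subst x; exists a => //; apply/Ck_clsP. Qed.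

Lemma PkP p : Pk H e k p <-> in_Ck (pr p).
Proof. by rewrite /Pk CksE Ck_clsP. Qed.

Lemma in_Ck_eqF y y' : eqF y y' -> in_Ck y -> in_Ck y'.
Proof.
move=> yy' [yr [z yz]]; split.
  exact: Hequiv_trans (eqF_mulr _ (Hequiv_sym yy')) (Hequiv_trans yr yy').
by exists z; apply: Hequiv_trans (eqF_mulr _ (Hequiv_sym yy')) yz.
Qed.

Lemma in_CkM a b : in_Ck a -> in_Ck b -> in_Ck (fmul a b).
Proof.
move=> [ar [za az]] [br [zb bz]]; split; first by rewrite -fmulA; apply: eqF_mull.
exists (fmul za zb); rewrite fmulA (fmulAC a b) -fmulA.
exact: Hequiv_trans (eqF_mul az bz) eqF_rr.
Qed.

Lemma in_Ck_funitM eps a : funit eps -> in_Ck a -> in_Ck (fmul eps a).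
Proof.
move=> ueps [ar [z az]]; split; first by rewrite -fmulA; apply: eqF_mull.
by exists (fmul (finv eps) z); rewrite fmulA (fmulAC eps) (fmulC eps) fmulVf // fmul1l.
Qed.

Lemma in_Ck_r : in_Ck r.
Proof. by split; [apply: eqF_rr | exists r; apply: eqF_rr]. Qed.

Lemma in_Ck_inv y : in_Ck y -> exists2 z, in_Ck z & eqF (fmul y z) r.
Proof.
move=> [yr [z yz]]; exists (fmul z r).
  split; first by rewrite -fmulA; apply/eqF_mull/eqF_rr.
  by exists y; rewrite fmulC fmulA; apply: Hequiv_trans (eqF_mulr _ yz) eqF_rr.
by rewrite fmulA; apply: Hequiv_trans (eqF_mulr _ yz) eqF_rr.
Qed.

Lemma Fk1 : Fk fone. Proof. exact: Fsub_funit. Qed.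
Lemma FkM x y : Fk x -> Fk y -> Fk (fmul x y). Proof. exact: FsubM. Qed.
Lemma Fk_r : Fk r. Proof. by apply: Fsub_prime_el; apply/PkP; apply: in_Ck_r. Qed.

Lemma in_Ck_seq_mset v (s : seq P) : s <> [::] -> (forall p, p \in s -> in_Ck (pr p)) ->
  in_Ck (v, seq_mset s).
Proof.
elim: s v => [|a s IH] v // _ hs.
have ha : in_Ck (pr a) by apply: hs; rewrite inE eqxx.
have -> : (v, seq_mset (a :: s)) = fmul (pr a) (v, seq_mset s).
  by rewrite mset_cons /fmul /= add0r.
case: s IH hs => [|b s] IH hs; first by rewrite seq_mset_nil fmulC; apply: in_Ck_funitM.
by apply: in_CkM => //; apply: IH => // p hp; apply: hs; rewrite inE hp orbT.
Qed.

Lemma nonfunit_in_Ck y : Fk y -> ~ funit y -> in_Ck y.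
Proof.
move=> Fy uy; have -> : y = (y.1, seq_mset (enum_mset y.2)) by rewrite seq_mset_id; case: y {Fy uy}.
apply: in_Ck_seq_mset => [enum0|p hp]; last exact/PkP/(Fsub_enum_mset Fy hp).
by apply: uy; rewrite /funit -(seq_mset_id y.2) enum0 seq_mset_nil.
Qed.

Lemma in_Ck_fexp a m : in_Ck a -> in_Ck (fexp a m.+1).
Proof. by move=> ha; elim: m => [|m IH]; rewrite fexpS ?fmul1r //; apply: in_CkM. Qed.

Lemma eqF_r_fexp x m : eqF x r -> eqF (fexp x m.+1) r.
Proof.
move=> xr; elim: m => [|m IH]; first by rewrite fexpS fmul1r.
by rewrite fexpS; apply: Hequiv_trans (eqF_mul xr IH) eqF_rr.
Qed.

(* C_k is a finite group with identity [r], so [a] has finite order. *)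
Lemma in_Ck_order a : in_Ck a -> exists d, eqF (fexp a d.+1) r.
Proof.
move=> ha; have [s hs] := clsF_finite; have [z _ az] := in_Ck_inv ha.
have [i [j [lt_ij /clsF_eqF aij]]] := pigeonhole_seq (fun i => hs (fexp a i.+1)).
have [d ed] : exists d, (j - i)%N = d.+1 by exists (j - i).-1; lia.
have azr := eqF_r_fexp i az.
have {}aij : eqF (fexp (fmul a z) i.+1) (fmul (fexp (fmul a z) i.+1) (fexp a d.+1)).
  move: aij; rewrite (_ : j.+1 = (i.+1 + d.+1)%N); last by lia.
  by rewrite fexpD => /(eqF_mull (fexp z i.+1)); rewrite fmulA -!fexpMn (fmulC z).
exists d; apply/Hequiv_sym/(Hequiv_trans (Hequiv_sym azr) (Hequiv_trans aij _)).
rewrite fmulC; exact: Hequiv_trans (eqF_mull _ azr) (in_Ck_fexp d ha).1.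
Qed.

(* a^(d+1) ~ r by [in_Ck_order], and a r ~ a. *)
Lemma H_in_Ck_eqF_r a : H a -> in_Ck a -> eqF a r.
Proof.
move=> Ha ha; have [d ad] := in_Ck_order ha.
move=> x _; split => Hx.
  apply: eqF_H (eqF_mull x ad) _.
  by rewrite fexpS fmulA; apply: HM => //; apply: H_fexp.
apply: eqF_H (eqF_mull x ha.1) _.
by rewrite fmulA fmulAC; apply: HM.
Qed.

Lemma classes_H_r : classes_H Fa H (e k) -> H r.
Proof. by case=> y [Hy ey]; apply: eqF_H Hy; apply: clsF_eqF; rewrite -ey ek_cls. Qed.

Lemma eqF_eqk y y' : Fk y -> Fk y' -> eqF y y' -> eqk y y'.
Proof. by move=> Fy Fy' yy' x Fx; split=> -[_ /(yy' x I) ?]; split => //; apply: FkM. Qed.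

Lemma Hk_units : ~ classes_H Fa H (e k) -> forall x, Hk x <-> unitIn H x.
Proof.
move=> not_ekH x; split; last first.
  by move=> ux; have Hx := ux.1; split => //; apply: Fsub_funit; apply/(unitIn_HP Hx).
case=> Fx Hx; have [ux|nux] := classic (funit x); first exact/(unitIn_HP Hx).
case: not_ekH; exists x; split => //; rewrite ek_cls; apply/Hequiv_cls/Hequiv_sym.
exact: H_in_Ck_eqF_r (nonfunit_in_Ck Fx nux).
Qed.

Lemma Hk_submonoid : submonoid Fk Hk.
Proof.
split; first by move=> x [].
split; first by split; [apply: Fk1 | apply: H1].
by move=> x y [Fx Hx] [Fy Hy]; split; [apply: FkM | apply: HM].
Qed.

Lemma unitIn_HkP x : Hk x -> unitIn Hk x <-> unitIn Fk x.
Proof.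
move=> [Fx Hx]; split; first by case=> _ [y [[Fy _] xy1]]; split => //; exists y.
case=> _ [y [_ xy1]]; have /funitM [ux _] : funit (fmul x y) by rewrite xy1.
have [_ [v [Hv xv1]]] := (unitIn_HP Hx).2 ux.
have /funitM [_ uv] : funit (fmul x v) by rewrite xv1.
by split => //; exists v; split => //; split => //; apply: Fsub_funit.
Qed.

Lemma Hk_classes_finite : finite_set (red_classes Fk Hk).
Proof.
have [s hs] := clsF_finite.
pose restrict (c : FF -> Prop) z := Fk z /\ exists y, Fk y /\ c = clsF y /\ eqk y z.
exists (List.map restrict s) => _ [y [hy ->]].
have Fy : Fk y by case: hy => [[]|->] //; apply: Fk1.
suff -> : clsk y = restrict (clsF y) by apply: List.in_map.
apply: functional_extensionality => z; apply: propositional_extensionality.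
split=> -[Fz]; first by split => //; exists y.
by case=> y' [Fy' [/clsF_eqF yy' y'z]]; split => //; apply: Hequiv_trans (eqF_eqk Fy Fy' yy') y'z.
Qed.

Lemma Hk_Cmonoid : C_monoid Fk Hk.
Proof. by split; [apply: Hk_submonoid | split; [apply: unitIn_HkP | apply: Hk_classes_finite]]. Qed.

Lemma Ck_prime d : Ck H e k d -> exists p, [/\ Fk (pr p), d = clsF (pr p) & in_Ck (pr p)].
Proof.
move=> hd; have [[z [_ ez]] _] := hd; subst d.
have [p zp] := eqF_prime z; have hp := in_Ck_eqF zp (proj1 (Ck_clsP z) hd).
by exists p; split => //; [apply: Fsub_prime_el; apply/PkP | apply: Hequiv_cls].
Qed.

Lemma eqk_eqF_funit y y' : funit y -> funit y' -> eqk y y' -> eqF y y'.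
Proof.
move=> uy uy' yy'.
have Hk_iy : Hk (fmul (finv y) y) by rewrite fmulVf //; apply: Hk_submonoid.2.1.
have [_ H_iy'] := (yy' _ (Fsub_funit _ (funit_finv y))).1 Hk_iy.
have := eqF_mull y (H_funit_eqF1 H_iy' (proj2 (funitM _ _) (conj (funit_finv y) uy'))).
by rewrite fmul1r fmulA (fmulC y) fmulVf // fmul1l; apply: Hequiv_sym.
Qed.

Section IdempotentInCH.
Hypothesis Hr : H r.

Lemma nonfunit_r y : ~ funit (fmul y r).
Proof. by rewrite fmulC; apply/nonfunitMr/prime_el_nonfunit. Qed.

Lemma Hk_eqF_r w : Fk w -> H w -> eqF (fmul w r) r.
Proof.
move=> Fw Hw; have [uw|nuw] := classic (funit w).
  by have := eqF_mulr r (H_funit_eqF1 Hw uw); rewrite fmul1l.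
have hw := nonfunit_in_Ck Fw nuw.
exact: Hequiv_trans hw.1 (H_in_Ck_eqF_r Hw hw).
Qed.

(* A prime p in the class inverse to [y] gives p y in H_k; transporting along
   y ~_k y' puts [y' p] in C_k n C_H, i.e. y' p ~ r ~ y p. *)
Lemma eqk_eqF_nonfunit y y' : Fk y -> Fk y' -> ~ funit y -> ~ funit y' ->
  eqk y y' -> eqF y y'.
Proof.
move=> Fy Fy' uy uy' yy'.
have hy := nonfunit_in_Ck Fy uy; have [z hz yz] := in_Ck_inv hy.
have [p zp] := eqF_prime z; have hp := in_Ck_eqF zp hz.
have Fp : Fk (pr p) by apply: Fsub_prime_el; apply/PkP.
have ypr : eqF (fmul y (pr p)) r := Hequiv_trans (eqF_mull y (Hequiv_sym zp)) yz.
have Hk_py : Hk (fmul (pr p) y).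
  by split; [apply: FkM | rewrite fmulC; apply: eqF_H (Hequiv_sym ypr) Hr].
have [_ H_py'] := (yy' (pr p) Fp).1 Hk_py.
have y'pr : eqF (fmul y' (pr p)) r.
  apply: H_in_Ck_eqF_r; first by rewrite fmulC.
  by apply: nonfunit_in_Ck; [apply: FkM | rewrite fmulC; apply/nonfunitMr/prime_el_nonfunit].
apply: Hequiv_sym; apply: Hequiv_trans (Hequiv_sym (nonfunit_in_Ck Fy' uy').1) _.
apply: Hequiv_trans (eqF_mull y' (Hequiv_sym ypr)) _.
by rewrite fmulCA; apply: Hequiv_trans (eqF_mull y y'pr) hy.1.
Qed.

Lemma eqk_eqF_mulr y y' : Fk y -> Fk y' -> eqk y y' -> eqF (fmul y r) (fmul y' r).
Proof.
move=> Fy Fy' yy'; apply: eqk_eqF_nonfunit; try apply: nonfunit_r.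
- exact: FkM Fy Fk_r.
- exact: FkM Fy' Fk_r.
- by apply: Hequiv_mulr yy'; [apply: FkM | apply: Fk_r].
Qed.

Section PhiInjective.
Hypothesis phik_inj : phik_injective H e k.

Lemma eqF_r_H w : Fk w -> eqF (fmul w r) r -> H w.
Proof.
move=> Fw wr; have [uw|nuw] := classic (funit w); last first.
  apply: eqF_H Hr; apply: Hequiv_sym.
  exact: Hequiv_trans (Hequiv_sym (nonfunit_in_Ck Fw nuw).1) wr.
have w1 : clsF w = clsF fone.
  apply: phik_inj.
  - by exists w; split => //; apply/unitIn_FallP.
  - by exists fone; split => //; apply/unitIn_FallP.
  - by rewrite /phik ek_cls !caddF fmul1l; apply: Hequiv_cls.
exact: eqF_H (Hequiv_sym (clsF_eqF w1)) H1.
Qed.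

Lemma eqF_mulr_eqk y y' : Fk y -> Fk y' -> eqF (fmul y r) (fmul y' r) -> eqk y y'.
Proof.
have half z z' : Fk z -> Fk z' -> eqF (fmul z r) (fmul z' r) ->
    forall x, Fk x -> Hk (fmul x z) -> Hk (fmul x z').
  move=> Fz Fz' zz' x Fx [_ Hxz]; split; first exact: FkM.
  apply: eqF_r_H; first exact: FkM.
  apply: Hequiv_trans _ (Hk_eqF_r (FkM Fx Fz) Hxz).
  by rewrite -!fmulA; apply: eqF_mull; apply: Hequiv_sym.
by move=> Fy Fy' yy' x Fx; split; apply: half => //; apply: Hequiv_sym.
Qed.

Lemma Hk_classes_iso_Ck : sg_iso (classes Fk Hk) (cadd Fk Hk) (Ck H e k) (cadd Fa H).
Proof.
apply: (sg_iso_classes FkM (g := fun y => clsF (fmul y r))).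
- by move=> y Fy; apply/Ck_clsP/nonfunit_in_Ck; [apply: FkM Fy Fk_r | apply: nonfunit_r].
- by move=> d /Ck_prime [p [Fp -> hp]]; exists (pr p) => //; apply: Hequiv_cls hp.1.
- move=> y y' Fy Fy'; split => [yy'|/clsF_eqF]; last exact: eqF_mulr_eqk.
  exact/Hequiv_cls/eqk_eqF_mulr.
- move=> y y' _ _; rewrite caddF; apply: Hequiv_cls; apply: Hequiv_sym.
  by rewrite fmulA (fmulAC y r) -!fmulA; do 2 apply: eqF_mull; apply: eqF_rr.
Qed.

End PhiInjective.

Section PhiNotInjective.
Hypothesis phik_not_inj : ~ phik_injective H e k.

Lemma funit_absorbed_notin_H : exists d, [/\ funit d, eqF (fmul d r) r & ~ H d].
Proof.
apply: NNPP => no_d; apply: phik_not_inj => _ _ [a [/unitIn_FallP ua ->]] [b [/unitIn_FallP ub ->]].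
rewrite /phik ek_cls !caddF => /clsF_eqF ab.
apply: NNPP => neq_ab; apply: no_d; exists (fmul (finv a) b); split; first by apply/funitM.
  rewrite -fmulA; apply: Hequiv_trans (eqF_mull _ (Hequiv_sym ab)) _.
  by rewrite fmulA fmulVf // fmul1l.
move=> Hab; apply: neq_ab; apply: Hequiv_cls.
have := eqF_mull a (H_funit_eqF1 Hab (proj2 (funitM _ _) (conj (funit_finv a) ub))).
by rewrite fmul1r fmulA (fmulC a) fmulVf // fmul1l; apply: Hequiv_sym.
Qed.

(* eps^-1 y lies in H with class e_k, hence so does d eps^-1 y; transporting
   back along y ~_k eps would put d in H. *)
Lemma eqk_funit_nonfunit eps y : funit eps -> Fk y -> ~ funit y -> ~ eqk eps y.
Proof.
move=> ueps Fy uy epsy.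
have [d [ud dr not_Hd]] := funit_absorbed_notin_H.
have Fi : Fk (finv eps) by apply: Fsub_funit.
have Fd : Fk d by apply: Fsub_funit.
have Hk_ie : Hk (fmul (finv eps) eps) by rewrite fmulVf //; apply: Hk_submonoid.2.1.
have [_ H_iy] := (epsy _ Fi).1 Hk_ie.
have iyr : eqF (fmul (finv eps) y) r.
  apply: H_in_Ck_eqF_r => //; apply: nonfunit_in_Ck; first exact: FkM.
  by case/funitM.
have Hk_diy : Hk (fmul (fmul d (finv eps)) y).
  split; first by apply: FkM => //; apply: FkM.
  rewrite -fmulA; apply: eqF_H Hr; apply: Hequiv_sym.
  exact: Hequiv_trans (eqF_mull d iyr) dr.
have [_] := (epsy _ (FkM Fd Fi)).2 Hk_diy.
by rewrite -fmulA fmulVf // fmul1r.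
Qed.

Lemma eqk_eqF y y' : Fk y -> Fk y' -> eqk y y' -> eqF y y'.
Proof.
move=> Fy Fy' yy'.
have [uy|nuy] := classic (funit y); have [uy'|nuy'] := classic (funit y').
- exact: eqk_eqF_funit.
- by case: (eqk_funit_nonfunit uy Fy' nuy' yy').
- by case: (eqk_funit_nonfunit uy' Fy nuy (Hequiv_sym yy')).
- exact: eqk_eqF_nonfunit.
Qed.

Lemma Hk_classes_iso_units_Ck : sg_iso (classes Fk Hk) (cadd Fk Hk)
  (fun c => classes_units Fa H c \/ Ck H e k c) (cadd Fa H).
Proof.
apply: (sg_iso_classes FkM (g := clsF)).
- move=> y Fy; have [uy|nuy] := classic (funit y).
    by left; exists y; split => //; apply/unitIn_FallP.
  by right; apply/Ck_clsP/nonfunit_in_Ck.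
- move=> _ [[y [/unitIn_FallP uy ->]]|/Ck_prime [p [Fp -> _]]]; last by exists (pr p).
  by exists y => //; apply: Fsub_funit.
- move=> y y' Fy Fy'; split => [yy'|/clsF_eqF]; last exact: eqF_eqk.
  exact/Hequiv_cls/eqk_eqF.
- by move=> y y' _ _; rewrite caddF.
Qed.

End PhiNotInjective.
End IdempotentInCH.

Section ClassGroup.
Hypothesis Hk_group : sg_group (classes Fk Hk) (cadd Fk Hk).

(* [1]_k is the identity of the group; the inverse [z] of [h] gives h z ~_k 1,
   and h, h z both lie in H with classes in C_k, so both are ~ r. *)
Lemma Hk_eqk1 h : Hk h -> eqk h fone.
Proof.
move=> [Fh Hh]; have [uh|nuh] := classic (funit h).
  by apply: eqF_eqk => //; [apply: Fk1 | apply: H_funit_eqF1].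
have [_ [[yu [Fyu ->]] [u_id u_inv]]] := Hk_group.
have u1 : clsk yu = clsk fone.
  have := u_id _ (ex_intro _ fone (conj Fk1 erefl)).
  by rewrite (cadd_cls Hk FkM) ?fmul1l //; apply: Fk1.
have [_ [[z [Fz ->]] hz1]] := u_inv _ (ex_intro _ h (conj Fh erefl)).
have {}hz1 : eqk (fmul h z) fone.
  by apply: cls_Hequiv Fk1 _; rewrite -u1 -hz1 (cadd_cls Hk FkM).
have Hk_hz : Hk (fmul h z).
  by have := (hz1 fone Fk1).2; rewrite !fmul1l; apply; apply: Hk_submonoid.2.1.
have hzr := H_in_Ck_eqF_r Hk_hz.2 (nonfunit_in_Ck (FkM Fh Fz) (nonfunitMr (y := z) nuh)).
have hr := H_in_Ck_eqF_r Hh (nonfunit_in_Ck Fh nuh).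
apply: Hequiv_trans hz1; apply: eqF_eqk => //; first exact: FkM.
exact: Hequiv_trans hr (Hequiv_sym hzr).
Qed.

Lemma Hk_saturated a c : Hk a -> Fk c -> Hk (fmul a c) -> Hk c.
Proof. by move=> Ha Fc; have [+ _] := Hk_eqk1 Ha Fc; rewrite fmul1r fmulC. Qed.

Lemma Hk_Krull : Krull Hk.
Proof.
apply: saturated_Krull Hk_saturated; first by move=> x [].
exact: Hk_submonoid.2.2.
Qed.

End ClassGroup.

Section Transfer.
Hypothesis Hr : H r.

(* The ueqF-classes of elements of C_k are the elements of
   C_k^* / phi_k(C_{F^x}(H,F)). *)
Definition ueqF y y' := exists eps, funit eps /\ eqF y (fmul eps y').

Lemma ueqF_refl y : ueqF y y.
Proof. by exists fone; split => //; rewrite fmul1l. Qed.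
Lemma eqF_ueqF y y' : eqF y y' -> ueqF y y'.
Proof. by exists fone; split => //; rewrite fmul1l. Qed.
Lemma ueqF_sym y y' : ueqF y y' -> ueqF y' y.
Proof.
case=> eps [ueps yy']; exists (finv eps); split => //.
by have := eqF_mull (finv eps) yy'; rewrite fmulA fmulVf // fmul1l; apply: Hequiv_sym.
Qed.
Lemma ueqF_trans y1 y2 y3 : ueqF y1 y2 -> ueqF y2 y3 -> ueqF y1 y3.
Proof.
case=> [e1 [ue1 h1]] [e2 [ue2 h2]]; exists (fmul e1 e2); split; first exact/funitM.
by apply: Hequiv_trans h1 _; rewrite -fmulA; apply: eqF_mull.
Qed.
Lemma ueqF_mull x y y' : ueqF y y' -> ueqF (fmul x y) (fmul x y').
Proof. by case=> eps [ueps yy']; exists eps; split => //; rewrite fmulCA; apply: eqF_mull. Qed.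
Lemma ueqF_mulr x y y' : ueqF y y' -> ueqF (fmul y x) (fmul y' x).
Proof. by rewrite !(fmulC _ x); apply: ueqF_mull. Qed.

Lemma clsF_reps : exists sl : seq FF, forall y, exists2 y', List.In y' sl & eqF y y'.
Proof.
have [s hs] := clsF_finite.
suff [sl hsl] : exists sl : seq FF,
    forall y, List.In (clsF y) s -> exists2 y', List.In y' sl & eqF y y'.
  by exists sl => y; apply: hsl.
elim: s {hs} => [|c s [sl hsl]]; first by exists [::].
have [[y0 ->]|not_cls] := classic (exists y0, c = clsF y0).
  exists (y0 :: sl) => y [/clsF_eqF y0y|/hsl [y' hy' yy']].
    by exists y0; [left | apply: Hequiv_sym].
  by exists y'; [right|].
by exists sl => y [cy|/hsl]; first by case: not_cls; exists y.
Qed.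

Lemma Ck_transversal : exists L : seq FF,
  [/\ forall i, (i < size L)%N -> in_Ck (nth fone L i),
      forall y, in_Ck y -> exists2 i, (i < size L)%N & ueqF (nth fone L i) y
    & forall i j, (i < size L)%N -> (j < size L)%N ->
        ueqF (nth fone L i) (nth fone L j) -> i = j].
Proof.
have [sl hsl] := clsF_reps.
have [L [LA Lsl Luniq]] := finite_transversal in_Ck fone sl ueqF_refl ueqF_sym.
exists L; split => // y hy; have [y' hy' yy'] := hsl y.
have [i hi Ly'] := Lsl y' hy' (in_Ck_eqF yy' hy).
by exists i => //; apply: ueqF_trans Ly' (ueqF_sym (eqF_ueqF yy')).
Qed.

Section Transversal.
Variable L : seq FF.
Hypothesis L_Ck : forall i, (i < size L)%N -> in_Ck (nth fone L i).
Hypothesis L_onto : forall y, in_Ck y -> exists2 i, (i < size L)%N & ueqF (nth fone L i) y.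
Hypothesis L_uniq : forall i j, (i < size L)%N -> (j < size L)%N ->
  ueqF (nth fone L i) (nth fone L j) -> i = j.

Local Notation N := (size L).
Lemma size_L_gt0 : (0 < N)%N.
Proof. by have [i hi _] := L_onto in_Ck_r; apply: leq_ltn_trans hi. Qed.
Let i0 : 'I_N := Ordinal size_L_gt0.
Let Lf (i : 'I_N) := nth fone L i.
Lemma in_Ck_Lf i : in_Ck (Lf i). Proof. exact: L_Ck. Qed.

(* The position in L of the representative of y (junk i0 outside C_k); the
   group G below is C_k modulo units carried over to these positions. *)
Definition uidx y : 'I_N := odflt i0 [pick i : 'I_N | asbool (ueqF (Lf i) y)].

Lemma uidxP y : in_Ck y -> ueqF (Lf (uidx y)) y.
Proof.
move=> hy; rewrite /uidx; case: pickP => [i /asboolP //|no_i].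
by have [i hi Liy] := L_onto hy; move: (no_i (Ordinal hi)) => /asboolP.
Qed.

Lemma uidx_eq i y : in_Ck y -> ueqF (Lf i) y -> uidx y = i.
Proof.
move=> hy Liy; apply/val_inj/L_uniq; [apply: ltn_ord | apply: ltn_ord |].
exact: ueqF_trans (uidxP hy) (ueqF_sym Liy).
Qed.

Lemma uidx_ueqF y y' : in_Ck y -> in_Ck y' -> ueqF y y' -> uidx y = uidx y'.
Proof. by move=> hy hy' yy'; apply: uidx_eq => //; apply: ueqF_trans (uidxP hy') (ueqF_sym yy'). Qed.

Lemma ueqF_uidx y y' : in_Ck y -> in_Ck y' -> uidx y = uidx y' -> ueqF y y'.
Proof. by move=> hy hy' eyy'; apply: ueqF_trans (ueqF_sym (uidxP hy)) _; rewrite eyy'; apply: uidxP. Qed.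

Lemma uidx_Lf i : uidx (Lf i) = i.
Proof. by apply: uidx_eq; [apply: in_Ck_Lf | apply: ueqF_refl]. Qed.

Lemma uidx_mull a b : in_Ck a -> in_Ck b -> uidx (fmul (Lf (uidx a)) b) = uidx (fmul a b).
Proof.
move=> ha hb; apply: uidx_ueqF (ueqF_mulr _ (uidxP ha)); last exact: in_CkM.
exact: in_CkM (in_Ck_Lf _) hb.
Qed.
Lemma uidx_mulr a b : in_Ck a -> in_Ck b -> uidx (fmul a (Lf (uidx b))) = uidx (fmul a b).
Proof. by move=> ha hb; rewrite fmulC uidx_mull // fmulC. Qed.
Lemma uidx_mul a b : in_Ck a -> in_Ck b ->
  uidx (fmul (Lf (uidx a)) (Lf (uidx b))) = uidx (fmul a b).
Proof. by move=> ha hb; rewrite uidx_mull ?uidx_mulr //; apply: in_Ck_Lf. Qed.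

Let zero := uidx r.
Let add (i j : 'I_N) := uidx (fmul (Lf i) (Lf j)).
Let opp (i : 'I_N) := odflt i0 [pick j : 'I_N | asbool (ueqF (fmul (Lf i) (Lf j)) r)].

Lemma addA : associative add.
Proof.
move=> i j l; have hL := in_Ck_Lf; rewrite /add.
by rewrite (uidx_mulr (hL i) (in_CkM (hL j) (hL l))) (uidx_mull (in_CkM (hL i) (hL j)) (hL l)) fmulA.
Qed.

Lemma addC : commutative add.
Proof. by move=> i j; rewrite /add fmulC. Qed.

Lemma add0 : left_id zero add.
Proof.
move=> i; rewrite /add /zero (uidx_mull in_Ck_r (in_Ck_Lf i)).
apply: uidx_eq; first exact: in_CkM in_Ck_r (in_Ck_Lf i).
by apply: eqF_ueqF; apply: Hequiv_sym; rewrite fmulC; apply: (in_Ck_Lf i).1.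
Qed.

Lemma addN : left_inverse zero opp add.
Proof.
move=> i; rewrite /opp; case: pickP => [j /asboolP ij|no_j].
  rewrite /= addC /add /zero; apply: uidx_ueqF ij; last exact: in_Ck_r.
  exact: in_CkM (in_Ck_Lf _) (in_Ck_Lf _).
have [z hz iz] := in_Ck_inv (in_Ck_Lf i).
move: (no_j (uidx z)) => /asboolP []; apply: ueqF_trans (ueqF_mull _ (uidxP hz)) _.
exact: eqF_ueqF.
Qed.

Definition G : finZmodType := oz_sort (OrdZmod addA addC add0 addN).

Lemma uidxM a b : in_Ck a -> in_Ck b -> uidx (fmul a b) = ((uidx a : G) + uidx b)%R.
Proof. by move=> ha hb; rewrite oz_addE /= /add uidx_mul. Qed.

Lemma uidx_r : (uidx r : G) = 0%R. Proof. by []. Qed.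

Definition theta (u : FF) : {ffun G -> nat} :=
  fcount (fun p => uidx (pr p) : G) (enum_mset u.2).
Local Notation cnt := (fcount (fun p => uidx (pr p) : G)).

Lemma theta_seq_mset u s : u.2 = seq_mset s -> theta u = cnt s.
Proof. by move=> u2; rewrite /theta u2; apply/fcount_perm/perm_eq_seq_mset. Qed.
Lemma theta_mul u v : theta (fmul u v) = seqD (theta u) (theta v).
Proof. by rewrite /theta -fcount_cat; apply/fcount_perm/enum_msetD. Qed.
Lemma theta_one : theta fone = seq0 G.
Proof. by rewrite /theta /= enum_mset0 fcount_nil. Qed.

Lemma theta_eq0 u : theta u = seq0 G <-> funit u.
Proof.
split=> [|uu]; last by rewrite /theta uu enum_mset0 fcount_nil.
case hs : (enum_mset u.2) => [|a s] tu.
  by rewrite /funit -(seq_mset_id u.2) hs seq_mset_nil.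
by move/ffunP/(_ (uidx (pr a))): tu; rewrite !ffunE hs /= eqxx.
Qed.

Lemma in_Ck_enum u p : Fk u -> p \in enum_mset u.2 -> in_Ck (pr p).
Proof. by move=> Fu hp; apply/PkP; apply: Fsub_enum_mset Fu hp. Qed.

Lemma uidx_seq_mset (s : seq P) : s <> [::] -> (forall p, p \in s -> in_Ck (pr p)) ->
  (uidx (0%R, seq_mset s) : G) = (\sum_(p <- s) (uidx (pr p) : G))%R.
Proof.
elim: s => [|a s IH] // _ hs.
have ha : in_Ck (pr a) by apply: hs; rewrite inE eqxx.
have -> : ((0%R : V), seq_mset (a :: s)) = fmul (pr a) (0%R, seq_mset s).
  by rewrite mset_cons /fmul /= add0r.
case: s IH hs => [|b s] IH hs; first by rewrite seq_mset_nil fmul1r big_seq1.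
have hs' p : p \in b :: s -> in_Ck (pr p) by move=> hp; apply: hs; rewrite inE hp orbT.
by rewrite big_cons -IH // uidxM //; apply: in_Ck_seq_mset.
Qed.

Lemma uidx_Hk u : Hk u -> ~ funit u -> (uidx (0%R, u.2) : G) = 0%R.
Proof.
move=> [Fu Hu] nuu; rewrite -uidx_r.
have -> : ((0%R : V), u.2) = fmul (finv u) u by apply: FF_eq; rewrite /= ?addNr ?mset0D.
have hu := nonfunit_in_Ck Fu nuu.
apply: uidx_ueqF; [exact: in_Ck_funitM | exact: in_Ck_r |].
by exists (finv u); split => //; apply: eqF_mull; apply: H_in_Ck_eqF_r.
Qed.

Lemma theta_zero_sum u : Hk u -> zero_sum (theta u).
Proof.
move=> hu; rewrite /zero_sum /theta sum_fcount.
have [->|/eqP ne] := eqVneq (enum_mset u.2) [::]; first by rewrite big_nil.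
have nuu : ~ funit u by move=> uu; apply: ne; rewrite uu enum_mset0.
by rewrite -(uidx_seq_mset ne (fun p => in_Ck_enum hu.1)) seq_mset_id; apply: uidx_Hk.
Qed.

Lemma uidx_prime_onto (g : G) : exists p, in_Ck (pr p) /\ (uidx (pr p) : G) = g.
Proof.
have [p Lp] := eqF_prime (Lf g); have hp := in_Ck_eqF Lp (in_Ck_Lf g).
by exists p; split => //; rewrite -(uidx_ueqF (in_Ck_Lf g) hp (eqF_ueqF Lp)) uidx_Lf.
Qed.

Lemma Hk_zero_sum_seq (s : seq P) : (forall p, p \in s -> in_Ck (pr p)) ->
  (\sum_(p <- s) (uidx (pr p) : G))%R = 0%R -> exists u, Hk u /\ u.2 = seq_mset s.
Proof.
move=> s_Ck zs; have [->|/eqP ne] := eqVneq s [::].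
  by exists fone; split; [apply: Hk_submonoid.2.1 | rewrite seq_mset_nil].
have Fs : Fk ((0%R : V), seq_mset s) by apply: Fsub_seq_mset => p /s_Ck /PkP.
have [eps [ueps sr]] : ueqF ((0%R : V), seq_mset s) r.
  apply: ueqF_uidx (in_Ck_seq_mset 0%R ne s_Ck) in_Ck_r _.
  by rewrite uidx_r uidx_seq_mset.
exists (fmul (finv eps) (0%R, seq_mset s)); split; last by rewrite /= mset0D.
split; first by apply: FkM => //; apply: Fsub_funit.
apply: eqF_H Hr; apply: Hequiv_sym; apply: Hequiv_trans (eqF_mull _ sr) _.
by rewrite fmulA fmulVf // fmul1l.
Qed.

Lemma theta_onto b : zero_sum b -> exists u, Hk u /\ theta u = b.
Proof.
move=> zb; have [s [s_Ck cs]] := fcount_onto uidx_prime_onto b.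
rewrite /zero_sum -cs sum_fcount in zb.
have [u [hu u2]] := Hk_zero_sum_seq s_Ck zb.
by exists u; split => //; rewrite (theta_seq_mset u2).
Qed.

Lemma theta_unit u : Hk u -> theta u = seq0 G <-> unitIn Hk u.
Proof. by move=> hu; rewrite (unitIn_HkP hu) unitIn_FsubP theta_eq0. Qed.

Lemma Hk_cofactor v w : Hk v -> Fk w -> ~ funit v -> ~ funit w -> Hk (fmul v w) -> Hk w.
Proof.
move=> [Fv Hv] Fw nuv nuw [_ Hvw]; split => //.
have vr := H_in_Ck_eqF_r Hv (nonfunit_in_Ck Fv nuv).
apply: eqF_H Hvw; rewrite fmulC.
exact: Hequiv_trans (eqF_mull w vr) (nonfunit_in_Ck Fw nuw).1.
Qed.

Lemma theta_split u b c : Hk u -> zero_sum b -> theta u = seqD b c ->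
  exists v w, Hk v /\ Hk w /\ u = fmul v w /\ theta v = b /\ theta w = c.
Proof.
move=> hu zb /fcount_split [s1 [s2 [us12 [cb cc]]]]; subst b c.
have Hk1 : Hk fone := Hk_submonoid.2.1.
have [e1|/eqP ne1] := eqVneq s1 [::].
  exists fone, u; rewrite fmul1l theta_one e1 fcount_nil.
  by do !split => //; rewrite /theta (fcount_perm _ us12) e1.
have [e2|/eqP ne2] := eqVneq s2 [::].
  exists u, fone; rewrite fmul1r theta_one e2 fcount_nil.
  by do !split => //; rewrite /theta (fcount_perm _ us12) e2 cats0.
have s_Ck p : p \in s1 ++ s2 -> in_Ck (pr p) by rewrite -(perm_mem us12); apply: in_Ck_enum hu.1.
have [v [hv v2]] : exists v, Hk v /\ v.2 = seq_mset s1.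
  apply: Hk_zero_sum_seq => [p hp|]; first by apply: s_Ck; rewrite mem_cat hp.
  by move: zb; rewrite /zero_sum sum_fcount.
pose w : FF := ((u.1 - v.1)%R, seq_mset s2).
have uvw : u = fmul v w.
  apply: FF_eq; first by rewrite /= addrC subrK.
  apply/msetP => p; rewrite /= v2 !msetE2 !mset_seqE -count_cat.
  by rewrite -(permP us12) count_mem_mset.
have Fw : Fk w by apply: Fsub_seq_mset => p hp; apply/PkP/s_Ck; rewrite mem_cat hp orbT.
have nuw : ~ funit w by move/seq_mset_eq0.
have nuv : ~ funit v by rewrite /funit v2 => /seq_mset_eq0.
exists v, w; split => //; split; first by apply: Hk_cofactor hv Fw nuv nuw _; rewrite -uvw.
by split => //; split; apply: theta_seq_mset.
Qed.

Lemma theta_transfer : transfer_hom Hk theta.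
Proof.
split; first exact: theta_zero_sum.
split; first exact: theta_one.
split; first by move=> u v _ _; apply: theta_mul.
split; first exact: theta_onto.
split; first exact: theta_unit.
by move=> u b c hu zb _; apply: theta_split.
Qed.

Definition cls_uidx (c : FF -> Prop) : G :=
  odflt i0 [pick i : 'I_N | asbool (exists y, c y /\ ueqF (Lf i) y)].

Lemma cls_uidx_clsF y : in_Ck y -> cls_uidx (clsF y) = uidx y.
Proof.
move=> hy; rewrite /cls_uidx; case: pickP => [i /asboolP [y' [[_ yy'] Liy']]|no_i].
  by apply/esym/uidx_eq => //; apply: ueqF_trans Liy' (ueqF_sym (eqF_ueqF yy')).
by move: (no_i (uidx y)) => /asboolP []; exists y; split; [split | apply: uidxP].
Qed.

Lemma transversal_transfer : transfer_to_quotient k.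
Proof.
exists G, cls_uidx; split; [|split; [|split]].
- move=> g; exists (clsF (Lf g)); split.
    by rewrite CksE; apply/Ck_clsP; apply: in_Ck_Lf.
  by rewrite (cls_uidx_clsF (in_Ck_Lf g)) uidx_Lf.
- move=> _ _ /Cks_clsF [a -> ha] /Cks_clsF [b -> hb].
  rewrite caddF (cls_uidx_clsF (in_CkM ha hb)) (cls_uidx_clsF ha) (cls_uidx_clsF hb).
  exact: uidxM.
- move=> _ /Cks_clsF [a -> ha]; rewrite (cls_uidx_clsF ha) -uidx_r; split.
    move=> /(ueqF_uidx ha in_Ck_r) [eps [ueps ae]].
    exists (clsF eps); split; first by exists eps; split => //; apply/unitIn_FallP.
    by rewrite /phik ek_cls caddF; apply: Hequiv_cls.
  case=> _ [[eps [/unitIn_FallP ueps ->]]]; rewrite /phik ek_cls caddF => /clsF_eqF ae.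
  by apply: uidx_ueqF ha in_Ck_r _; exists eps.
- by exists theta; apply: theta_transfer.
Qed.

End Transversal.

Lemma Hk_transfer : transfer_to_quotient k.
Proof.
have [L [L_Ck L_onto L_uniq]] := Ck_transversal.
exact: transversal_transfer L_Ck L_onto L_uniq.
Qed.

End Transfer.
End Idempotent.
End ConstituentGroup.

Theorem proposition4p1 (V : zmodType) (P : choiceType) (H : FF V P -> Prop)
    (n : nat) (e : nat -> FF V P -> Prop) :
  (* H is a seminormal C-monoid in F, dense in F *)
  C_monoid (Fall V P) H -> seminormal H -> dense H ->
  (* E(C) = E(C^* ) = {e_0, ..., e_n}, distinct, e_0 = [1], e_0 + ... + e_n = e_n *)
  e 0 = cls (Fall V P) H (fone V P) ->
  (forall i, (i <= n)%N ->
     red_classes (Fall V P) H (e i) /\ cadd (Fall V P) H (e i) (e i) = e i) ->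
  (forall x, classes (Fall V P) H x -> cadd (Fall V P) H x x = x ->
     exists i, (i <= n)%N /\ x = e i) ->
  (forall i j, (i <= n)%N -> (j <= n)%N -> e i = e j -> i = j) ->
  csum (Fall V P) H e n = e n ->
  (* every class of C^* contains a prime *)
  (forall c, red_classes (Fall V P) H c -> exists p : P, c (prime_el V p)) ->
  (forall k, (k <= n)%N ->
    C_monoid (Fk H e k) (Hk H e k) /\ seminormal (Hk H e k) /\
    (* (1) *)
    (~ classes_H (Fall V P) H (e k) -> forall x, Hk H e k x <-> unitIn H x) /\
    (classes_H (Fall V P) H (e k) -> phik_injective H e k ->
       sg_iso (classes (Fk H e k) (Hk H e k)) (cadd (Fk H e k) (Hk H e k))
              (Ck H e k) (cadd (Fall V P) H)) /\
    (classes_H (Fall V P) H (e k) -> ~ phik_injective H e k ->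
       sg_iso (classes (Fk H e k) (Hk H e k)) (cadd (Fk H e k) (Hk H e k))
              (fun c => classes_units (Fall V P) H c \/ Ck H e k c)
              (cadd (Fall V P) H)) /\
    (sg_group (classes (Fk H e k) (Hk H e k)) (cadd (Fk H e k) (Hk H e k)) ->
       Krull (Hk H e k)) /\
    (* (2): G is (isomorphic to) C_k^* / phi_k(C_{F^x}(H,F)) *)
    (classes_H (Fall V P) H (e k) ->
       exists (G : finZmodType) (psi : (FF V P -> Prop) -> G),
         (forall g : G, exists x, Cks H e k x /\ psi x = g) /\
         (forall x y, Cks H e k x -> Cks H e k y ->
            psi (cadd (Fall V P) H x y) = (psi x + psi y)%R) /\
         (forall x, Cks H e k x ->
            (psi x = 0%R <-> exists c, classes_units (Fall V P) H c /\ x = phik H e k c)) /\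
         exists theta : FF V P -> {ffun G -> nat}, transfer_hom (Hk H e k) theta)) /\
  (* in particular C(H_0, F_0) ~= C_0 *)
  sg_iso (classes (Fk H e 0) (Hk H e 0)) (cadd (Fk H e 0) (Hk H e 0))
         (Ck H e 0) (cadd (Fall V P) H).
Proof.
move=> H_Cmonoid H_sn _ e0 e_idem _ _ _ red_prime.
have ek_prime k : (k <= n)%N -> exists2 pk, e k = cls (Fall V P) H (prime_el V pk)
    & cadd (Fall V P) H (e k) (e k) = e k.
  by move=> /e_idem [/(red_class_prime_cls red_prime) [pk ekp] idem]; exists pk.
split=> [k /ek_prime [pk ekp idem]|].
  have Hr := classes_H_r ekp.
  split; first exact: Hk_Cmonoid.
  split; first exact: seminormal_Fsub.
  split; first exact: Hk_units ekp idem.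
  split; first by move=> /Hr; apply: Hk_classes_iso_Ck ekp idem.
  split; first by move=> /Hr; apply: Hk_classes_iso_units_Ck ekp idem.
  split; first exact: Hk_Krull ekp idem.
  by move=> /Hr; apply: Hk_transfer ekp idem.
have [p0 e0p idem0] := ek_prime 0 (leq0n n).
apply: (Hk_classes_iso_Ck H_Cmonoid red_prime e0p idem0).
  by apply: classes_H_r e0p _; exists (fone V P); split; [apply: H1 | ].
by move=> _ _ [a [_ ->]] [b [_ ->]]; rewrite /phik e0 !caddF !fmul1r.
Qed.
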